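(* There is a constant $C>0$ such that for all $n\ge 2$ and $D\ge 1$ there exist a deterministic distributed algorithm and, for every graph $G$ of size $n$ and diameter $D$, an advice assignment of size at most $C\,n\log n$, under which the algorithm accomplishes labeled topology recognition in $G$ within time $D$.
   Context: Graphs are finite, simple, undirected, connected, with no node labels; at each node of degree $d$ the incident edges carry distinct port numbers $0,\dots,d-1$ (no coherence between endpoints). Isomorphism is a bijection of nodes preserving edges and port numbers at both endpoints. Size = number of nodes; $\log$ is base 2. Communication model (LOCAL): synchronous rounds, all nodes start simultaneously; in each round every node may send arbitrary messages to all neighbours, receives their messages (knowing the arrival port), and performs arbitrary local computation. Initially a node knows only its degree and its advice. Advice: an oracle knowing the graph assigns each node a binary string; the size of advice is the maximum string length. All nodes run the same deterministic algorithm. Labeled topology recognition: all nodes output the same port-labeled graph $H$ with distinct node labels and each node its own label, such that some isomorphism $G\to H$ maps every node to the node carrying the label it output. Time is the number of rounds until all nodes have output. *)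

From Stdlib Require Import Reals.
From mathcomp Require Import all_boot.

Set Implicit Arguments.
Unset Strict Implicit.
Unset Printing Implicit Defensive.

(* A port-labeled graph on nodes 0 .. size G - 1.
   [nth (0,0) (adj G v) i = (w, j)] means: the edge leaving v by port i
   goes to node w and arrives there on port j. *)
Definition pgraph := seq (seq (nat * nat)).

Definition adj (G : pgraph) (v : nat) : seq (nat * nat) := nth [::] G v.

Definition deg (G : pgraph) (v : nat) : nat := size (adj G v).

Definition wf_pgraph (G : pgraph) : Prop :=
  forall v, v < size G ->
    uniq (map fst (adj G v)) /\
    forall i, i < deg G v ->
      let: (w, j) := nth (0, 0) (adj G v) i in
      [/\ w < size G, w <> v, j < deg G w & nth (0, 0) (adj G w) j = (v, i)].

Fixpoint reach (G : pgraph) (k : nat) (u v : nat) : bool :=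
  if k is k'.+1 then (u == v) || has (fun p => reach G k' p.1 v) (adj G u)
  else u == v.

(* G has diameter D (for D >= 1): every pair is at distance <= D, and some
   pair is at distance > D - 1.  This also forces connectivity. *)
Definition has_diameter (G : pgraph) (D : nat) : Prop :=
  (forall u v, u < size G -> v < size G -> reach G D u v) /\
  (exists u v, [/\ u < size G, v < size G & ~~ reach G D.-1 u v]).

Definition pg_iso (G H : pgraph) (f : nat -> nat) : Prop :=
  [/\ size H = size G,
      (forall v, v < size G -> f v < size H),
      (forall u v, u < size G -> v < size G -> f u = f v -> u = v) &
      (forall v, v < size G ->
         adj H (f v) = map (fun p => (f p.1, p.2)) (adj G v))].

(* A deterministic LOCAL algorithm, run identically by all nodes.
   Outputs are a labeled graph H (node labels are the node indices
   0 .. size H - 1 of H, hence distinct) together with the node's label. *)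
Record algo := Algo {
  St : Type;
  Msg : Type;
  init : nat -> seq bool -> St;        (* degree, advice *)
  send : St -> nat -> Msg;             (* message sent on a given port *)
  recv : St -> seq Msg -> St;          (* messages indexed by arrival port *)
  outp : St -> option (pgraph * nat)
}.

Fixpoint state (A : algo) (G : pgraph) (adv : nat -> seq bool) (t : nat)
  : nat -> St A :=
  match t with
  | 0 => fun v => @init A (deg G v) (adv v)
  | t'.+1 =>
      let s := state A G adv t' in
      fun v => @recv A (s v) (map (fun p => @send A (s p.1) p.2) (adj G v))
  end.

Definition outputs_at (A : algo) (G : pgraph) (adv : nat -> seq bool)
    (v t : nat) (o : pgraph * nat) : Prop :=
  @outp A (state A G adv t v) = Some o /\
  forall t', t' < t -> @outp A (state A G adv t' v) = None.

Definition recognizes_within (A : algo) (G : pgraph) (adv : nat -> seq bool)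
    (T : nat) : Prop :=
  exists (H : pgraph) (lab : nat -> nat),
    (forall v, v < size G -> exists t, t <= T /\ outputs_at A G adv v t (H, lab v))
    /\ pg_iso G H lab.

(* Each node receives, in blocks of [trunc_log 2 n + 1] bits, its own label
   followed by its adjacency row: the label of the neighbour behind each port
   and the port on which the edge arrives there.  Degrees are below [n], so
   this is [O(n log n)] bits.  In every round a node forwards all the rows it
   knows; after [t] rounds it knows the row of every node at distance at most
   [t].  With diameter [D] every node thus knows all of [G] after [D] rounds
   and outputs [G] itself, labeled by the identity. *)

From Stdlib Require Import Reals Lra.
From mathcomp Require Import all_boot.

Set Implicit Arguments.
Unset Strict Implicit.
Unset Printing Implicit Defensive.

Fixpoint bits_of (k x : nat) : seq bool :=
  if k is k'.+1 then odd x :: bits_of k' x./2 else [::].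

Fixpoint nat_of_bits (s : seq bool) : nat :=
  if s is b :: s' then b + (nat_of_bits s').*2 else 0.

Lemma size_bits_of k x : size (bits_of k x) = k.
Proof. by elim: k x => //= k IH x; rewrite IH. Qed.

Lemma bits_ofK k x : x < 2 ^ k -> nat_of_bits (bits_of k x) = x.
Proof.
elim: k x => [|k IH] x /=; first by rewrite expn0; case: x.
rewrite expnS mul2n -ltn_half_double => /IH ->.
exact: odd_double_half.
Qed.

Fixpoint decode_blocks (k m : nat) (s : seq bool) : seq nat :=
  if m is m'.+1 then nat_of_bits (take k s) :: decode_blocks k m' (drop k s)
  else [::].

Lemma decode_blocksK k xs : all (fun x => x < 2 ^ k) xs ->
  decode_blocks k (size xs) (flatten (map (bits_of k) xs)) = xs.
Proof.
elim: xs => //= x xs IH /andP [x_lt xs_lt].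
by rewrite take_size_cat ?drop_size_cat ?size_bits_of // bits_ofK // IH.
Qed.

Lemma size_flatten_bits_of k xs : size (flatten (map (bits_of k) xs)) = k * size xs.
Proof. by elim: xs => [|x xs IH] /=; rewrite ?muln0 // size_cat size_bits_of IH mulnS. Qed.

Fixpoint pair_up (l : seq nat) : seq (nat * nat) :=
  if l is a :: b :: r then (a, b) :: pair_up r else [::].

Definition unpair (ps : seq (nat * nat)) : seq nat :=
  flatten [seq [:: p.1; p.2] | p <- ps].

Lemma unpairK : cancel unpair pair_up.
Proof. by elim=> //= [[a b] ps] IH; rewrite IH. Qed.

Lemma size_unpair ps : size (unpair ps) = 2 * size ps.
Proof. by elim: ps => //= p ps IH; rewrite IH mulnS. Qed.

Lemma mem_adj_lt G v p : wf_pgraph G -> v < size G -> p \in adj G v ->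
  p.1 < size G /\ p.2 < deg G p.1.
Proof.
move=> wfG v_lt /(nthP (0, 0)) [i i_lt <-].
have [_ /(_ i i_lt)] := wfG v v_lt.
by case: (nth _ _ i) => w j [].
Qed.

Lemma deg_le_size G v : wf_pgraph G -> v < size G -> deg G v <= size G.
Proof.
move=> wfG v_lt; have [uniq_nbrs _] := wfG v v_lt.
rewrite /deg -(size_map fst) -(size_iota 0 (size G)).
apply: uniq_leq_size => // _ /mapP [p p_in ->].
by rewrite mem_iota; have [] := mem_adj_lt wfG v_lt p_in.
Qed.

Lemma reach_refl G t v : reach G t v v.
Proof. by case: t => [|t] /=; rewrite eqxx. Qed.

Definition table := seq (nat * seq (nat * nat)).

Definition lookup (u : nat) (K : table) : seq (nat * nat) :=
  (nth (0, [::]) K (find (fun r => r.1 == u) K)).2.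

Definition label_width (n : nat) : nat := (trunc_log 2 n).+1.

Lemma lt_pow_label_width n x : x < n -> x < 2 ^ label_width n.
Proof. by move=> /leq_trans; apply; apply/ltnW/trunc_log_ltn. Qed.

Definition advice (n : nat) (G : pgraph) (v : nat) : seq bool :=
  flatten (map (bits_of (label_width n)) (v :: unpair (adj G v))).

Definition decode_advice (k d : nat) (s : seq bool) : nat * seq (nat * nat) :=
  let l := decode_blocks k (1 + 2 * d) s in (head 0 l, pair_up (behead l)).

(* A state is (round number, own label, table of known adjacency rows). *)
Definition flood (n D : nat) : algo :=
  @Algo (nat * nat * table)%type table
    (fun d s => (0, (decode_advice (label_width n) d s).1,
                 [:: decode_advice (label_width n) d s]))
    (fun s _ => s.2)
    (fun s ms => (s.1.1.+1, s.1.2, s.2 ++ flatten ms))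
    (fun s => if s.1.1 == D then Some (mkseq (lookup ^~ s.2) n, s.1.2) else None).

Lemma state_flood_round n D G adv t v : (state (flood n D) G adv t v).1.1 = t.
Proof. by elim: t v => //= t IH v; rewrite IH. Qed.

Section Flooding.
Variables (D : nat) (G : pgraph).
Hypothesis wfG : wf_pgraph G.

Local Notation n := (size G).
Local Notation st t v := (state (flood n D) G (advice n G) t v).

Definition sound_table (K : table) : Prop := forall r, r \in K -> r.2 = adj G r.1.

Lemma decode_adviceK v : v < n ->
  decode_advice (label_width n) (deg G v) (advice n G v) = (v, adj G v).
Proof.
move=> v_lt.
have blocks_lt : all (fun x => x < 2 ^ label_width n) (v :: unpair (adj G v)).
  rewrite /= lt_pow_label_width //=; apply/allP => x.
  move=> /flatten_mapP [p /(mem_adj_lt wfG v_lt) [p1_lt p2_lt]].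
  rewrite !inE => /orP [] /eqP ->; apply: lt_pow_label_width => //.
  exact: leq_trans p2_lt (deg_le_size wfG p1_lt).
rewrite /decode_advice /advice /deg.
have := decode_blocksK blocks_lt; rewrite [size (_ :: _)]/= size_unpair add1n => ->.
by rewrite /= unpairK.
Qed.

Lemma state_flood0 v : v < n -> st 0 v = (0, v, [:: (v, adj G v)]).
Proof.
move=> v_lt; set dv := decode_advice (label_width n) (deg G v) (advice n G v).
by change ((0, dv.1, [:: dv]) = (0, v, [:: (v, adj G v)])); rewrite /dv decode_adviceK.
Qed.

Lemma state_flood_label t v : v < n -> (st t v).1.2 = v.
Proof. by move=> v_lt; elim: t => [|t IH]; [rewrite state_flood0 | exact: IH]. Qed.

Lemma state_flood_sound t v : v < n -> sound_table (st t v).2.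
Proof.
elim: t v => [|t IH] v v_lt r; first by rewrite state_flood0 // inE => /eqP ->.
rewrite mem_cat => /orP [/IH -> //|/flatten_mapP [p p_in]].
by apply: IH; have [] := mem_adj_lt wfG v_lt p_in.
Qed.

Lemma state_flood_complete t v u : v < n -> reach G t v u ->
  has (fun r => r.1 == u) (st t v).2.
Proof.
elim: t v => [|t IH] v v_lt; first by rewrite state_flood0 //= orbF.
move=> /orP [/eqP vu|/hasP [p p_in reach_pu]] /=; rewrite has_cat.
  by rewrite IH // -vu reach_refl.
have [p1_lt _] := mem_adj_lt wfG v_lt p_in.
have /hasP [r r_in r_u] := IH p.1 p1_lt reach_pu.
by apply/orP; right; apply/hasP; exists r => //; apply/flatten_mapP; exists p.
Qed.

Lemma lookup_sound K u : sound_table K -> has (fun r => r.1 == u) K ->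
  lookup u K = adj G u.
Proof.
move=> K_sound u_in; have /eqP found := nth_find (0, [::]) u_in.
by rewrite /lookup K_sound ?found // mem_nth // -has_find.
Qed.

Lemma flood_outputs_graph v : v < n -> (forall u, u < n -> reach G D v u) ->
  outputs_at (flood n D) G (advice n G) v D (G, v).
Proof.
move=> v_lt reach_all; split=> [|t t_lt]; rewrite /= state_flood_round; last first.
  by rewrite ifN // neq_ltn t_lt.
rewrite eqxx state_flood_label //; congr (Some (_, _)).
apply: (@eq_from_nth _ [::]) => [|u]; rewrite size_mkseq // => u_lt.
rewrite nth_mkseq // lookup_sound //; first exact: state_flood_sound.
exact/state_flood_complete/reach_all.
Qed.

Lemma pg_iso_id : pg_iso G G id.
Proof. by split=> // v _; elim: (adj G v) => //= [[a b] l] <-. Qed.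

Lemma flood_recognizes : has_diameter G D ->
  recognizes_within (flood n D) G (advice n G) D.
Proof.
move=> [reach_all _]; exists G, id; split; last exact: pg_iso_id.
by move=> v v_lt; exists D; split=> //; apply: flood_outputs_graph => // u; apply: reach_all.
Qed.

Lemma size_advice v : v < n -> size (advice n G v) <= label_width n * (2 * n + 1).
Proof.
move=> v_lt; rewrite /advice size_flatten_bits_of /= size_unpair.
by rewrite leq_mul // addn1 ltnS leq_mul2l deg_le_size.
Qed.

End Flooding.

Local Open Scope R_scope.

Lemma ln_le_ln x y : 0 < x -> x <= y -> ln x <= ln y.
Proof. by move=> x_gt0 le_xy; apply: Rnot_lt_le => /ln_lt_inv; lra. Qed.

Lemma INR_expn m k : INR (m ^ k)%nat = INR m ^ k.
Proof. by elim: k => [|k IH] //; rewrite expnS -multE mult_INR IH. Qed.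

Lemma trunc_log2_le_log2 n : (1 <= n)%nat ->
  INR (trunc_log 2 n) <= ln (INR n) / ln 2.
Proof.
move=> n_gt0; have ln2_gt0 : 0 < ln 2 by rewrite -ln_1; apply: ln_increasing; lra.
apply: (Rmult_le_reg_r (ln 2)) => //.
rewrite /Rdiv Rmult_assoc Rinv_l; last lra.
rewrite Rmult_1_r -ln_pow; last lra.
apply: ln_le_ln; first by apply: pow_lt; lra.
by rewrite -[2]/(INR 2) -INR_expn; apply/le_INR/leP/trunc_logP.
Qed.

Lemma label_width_bound n : (2 <= n)%nat ->
  INR (label_width n * (2 * n + 1)) <= 6 * INR n * (ln (INR n) / ln 2).
Proof.
move=> n_ge2; have t_le := trunc_log2_le_log2 (ltnW n_ge2).
have one_le : 1 <= ln (INR n) / ln 2.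
  apply: Rle_trans t_le; apply/(le_INR 1)/leP; by rewrite trunc_log_gt0.
have n_ge2R : 2 <= INR n by apply/(le_INR 2)/leP.
rewrite /label_width -multE -plusE mult_INR plus_INR mult_INR S_INR.
rewrite [INR 2]/= [INR 1]/=; nra.
Qed.

Local Close Scope R_scope.

Theorem proposition5p1 :
  exists C : R, Rlt 0 C /\
  forall n D : nat, 2 <= n -> 1 <= D ->
    exists A : algo,
      forall G : pgraph, wf_pgraph G -> size G = n -> has_diameter G D ->
        exists adv : nat -> seq bool,
          (forall v, v < n ->
             Rle (INR (size (adv v)))
                 (Rmult (Rmult C (INR n)) (Rdiv (ln (INR n)) (ln 2)))) /\
          recognizes_within A G adv D.
Proof.
exists (6 : R); split; first lra.
move=> n D n_ge2 _; exists (flood n D) => G wfG sizeG diamG; subst n.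
exists (advice (size G) G); split; last exact: flood_recognizes.
move=> v v_lt; apply: Rle_trans (label_width_bound n_ge2).
exact/le_INR/leP/size_advice.
Qed.
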